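(* Let $p(n)$ be a function. For each function $L:\{0,1\}^n\to\{0,1\}$ let $|\psi_L\rangle$ be a $p(n)$-qubit state. Let $\mathcal{Q}$ be any (computationally unbounded) quantum algorithm that, on input $x\in\{0,1\}^n$, performs a measurement depending only on $x$ (and not on $L$) on $|\psi_L\rangle$ and outputs a bit $\mathcal{Q}(x,|\psi_L\rangle)$. Then $$\Pr_{x,L}[\mathcal{Q}(x,|\psi_L\rangle)=L(x)]\le\frac12+O\Big(\big(p(n)/2^n\big)^{1/3}\Big),$$ where $L$ is a uniformly random function and $x$ is uniform in $\{0,1\}^n$. *)

From HB Require Import structures.
From mathcomp Require Import all_boot all_order all_algebra.
From mathcomp Require Import reals exp.
From mathcomp Require Import complex.
Set Implicit Arguments. Unset Strict Implicit. Unset Printing Implicit Defensive.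
Import Order.TTheory GRing.Theory Num.Theory.
Local Open Scope ring_scope.
Local Open Scope sesquilinear_scope.

Definition bits (n : nat) := n.-tuple bool.
Definition boolfun (n : nat) := {ffun bits n -> bool}.

Definition is_state (R : realType) (m : nat) (v : 'cV[R[i]]_(2 ^ m)) : Prop :=
  (v ^t* *m v) 0 0 = 1.

(* A two-outcome measurement (POVM {E, 1 - E}) on m qubits is given by its
   effect E for outcome 1: a Hermitian operator with 0 <= E <= 1. *)
Definition is_effect (R : realType) (m : nat) (E : 'M[R[i]]_(2 ^ m)) : Prop :=
  E ^t* = E /\
  forall v : 'cV[R[i]]_(2 ^ m),
    0 <= (v ^t* *m E *m v) 0 0 /\ (v ^t* *m E *m v) 0 0 <= (v ^t* *m v) 0 0.

Definition prob_one (R : realType) (m : nat) (E : 'M[R[i]]_(2 ^ m))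
  (v : 'cV[R[i]]_(2 ^ m)) : R :=
  complex.Re ((v ^t* *m E *m v) 0 0).

(* Pr_{x,L}[ Q(x, |psi_L>) = L(x) ], x uniform in {0,1}^n, L uniform random
   function, where Q on input x measures with the POVM {E x, 1 - E x}
   and outputs the outcome. *)
Definition success_prob (R : realType) (n m : nat)
  (psi : boolfun n -> 'cV[R[i]]_(2 ^ m)) (E : bits n -> 'M[R[i]]_(2 ^ m)) : R :=
  (#|{: bits n}|%:R * #|{: boolfun n}|%:R)^-1 *
  \sum_(x : bits n) \sum_(L : boolfun n)
     (if L x then prob_one (E x) (psi L) else 1 - prob_one (E x) (psi L)).

From HB Require Import structures.
From mathcomp Require Import all_boot all_order all_algebra.
From mathcomp Require Import reals exp.
From mathcomp Require Import complex.
From mathcomp Require Import ring lra zify.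
Set Implicit Arguments. Unset Strict Implicit. Unset Printing Implicit Defensive.
Import Order.TTheory GRing.Theory Num.Theory.
Local Open Scope ring_scope.
Local Open Scope sesquilinear_scope.

(* Subtracting 1/2 from each effect E x gives Hermitian operators M x whose
   quadratic forms, hence norms, are bounded by 1/2, and the success probability
   is 1/2 + bias / (2^n 2^(2^n)) with bias = sum_L <psi L, S_L psi L>, where
   S_L = sum_x s_L(x) M x and s_L(x) is 1 if L x and -1 otherwise.  The bias is controlled by a moment method: for h
   a power of two, the power-mean inequality and repeated Cauchy-Schwarz give
   bias^(2h) <= K^(2h-1) sum_L tr (S_L^(2h)), where K = 2^(2^n) is the number of
   functions L.  Averaging over L kills every word M x_1 ... M x_2h in which some
   letter occurs an odd number of times; at most (2h 2^n)^h words survive, each of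
   trace at most 2^p 4^-h.  Choosing h <= p < 2h yields bias^2 <= 2 p 2^n K^2, so
   the advantage is even at most sqrt (2 p / 2^n), which implies the cube-root bound. *)

(* Expand [0 <= sum_(i, j) (a i - a j)^2]. *)
Lemma real_sqr_sum_le (C : numDomainType) (I : finType) (a : I -> C) :
  (forall i, a i \is Num.real) -> (\sum_i a i) ^+ 2 <= #|I|%:R * \sum_i a i ^+ 2.
Proof.
move=> a_real; have sq_ge0 : 0 <= \sum_(i : I) \sum_(j : I) (a i - a j) ^+ 2.
  by do 2 (apply: sumr_ge0 => ? _); rewrite real_exprn_even_ge0 ?rpredB.
move: sq_ge0; have -> : \sum_(i : I) \sum_(j : I) (a i - a j) ^+ 2 =
    \sum_(i : I) \sum_(j : I) a i ^+ 2 + \sum_(i : I) \sum_(j : I) a j ^+ 2 -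
    2%:R * \sum_(i : I) \sum_(j : I) a i * a j.
  rewrite mulr_sumr -big_split -sumrB /=; apply: eq_bigr => i _.
  by rewrite mulr_sumr -big_split -sumrB /=; apply: eq_bigr => j _; ring.
have -> : \sum_(i : I) \sum_(j : I) a i * a j = (\sum_i a i) ^+ 2.
  by rewrite expr2 big_distrlr.
have -> : \sum_(i : I) \sum_(j : I) a i ^+ 2 = #|I|%:R * \sum_i a i ^+ 2.
  by rewrite mulr_sumr; apply: eq_bigr => i _; rewrite sumr_const mulr_natl.
have -> : \sum_(i : I) \sum_(j : I) a j ^+ 2 = #|I|%:R * \sum_i a i ^+ 2.
  by rewrite sumr_const mulr_natl.
have -> : forall x y : C, x + x - 2%:R * y = 2%:R * (x - y) by move=> x y; ring.
by rewrite pmulr_rge0 ?ltr0n // subr_ge0.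
Qed.

Lemma real_exp2_sum_le (C : numDomainType) (I : finType) (a : I -> C) j :
  (forall i, a i \is Num.real) -> (\sum_i a i) ^+ (2 ^ j.+1) <=
  #|I|%:R ^+ (2 ^ j.+1 - 1) * \sum_i a i ^+ (2 ^ j.+1).
Proof.
move=> a_real; elim: j => [|j IH]; first by rewrite expn1 expr1 real_sqr_sum_le.
set q := (2 ^ j.+1)%N in IH *; have q_even : ~~ odd q by rewrite oddX.
have -> : (2 ^ j.+2 = q * 2)%N by rewrite expnS mulnC.
have sum_real : \sum_i a i \is Num.real by apply: rpred_sum.
rewrite !exprM; apply: le_trans (_ : (#|I|%:R ^+ (q - 1) * \sum_i a i ^+ q) ^+ 2 <= _).
  by rewrite ler_pXn2r // nnegrE ?real_exprn_even_ge0 // (le_trans _ IH) ?real_exprn_even_ge0.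
rewrite exprMn -exprM; apply: le_trans (_ : _ <= #|I|%:R ^+ ((q - 1) * 2) *
    (#|I|%:R * \sum_i (a i ^+ q) ^+ 2)) _.
  by rewrite ler_wpM2l ?exprn_ge0 ?ler0n // real_sqr_sum_le // => i; rewrite rpredX.
rewrite mulrA -exprSr.
have q_gt0 : (0 < q)%N by rewrite expn_gt0.
have -> : ((q - 1) * 2).+1 = (q * 2 - 1)%N by lia.
by under eq_bigr do rewrite -exprM.
Qed.

Lemma le_double_of_sqr_le_cube (R : realFieldType) (b y : R) :
  b <= 2^-1 -> 0 <= y -> b ^+ 2 <= 2%:R * y ^+ 3 -> b <= 2%:R * y.
Proof.
move=> b_le y_ge0 b_sqr; have [y_le2 | ] := lerP y 2%:R; last by lra.
have : b ^+ 2 <= (2%:R * y) ^+ 2 by nra.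
by nra.
Qed.

Section DotProduct.
Variables (C : numClosedFieldType) (k : nat).
Implicit Types (u v w : 'cV[C]_k) (M P S T : 'M[C]_k).

Definition dotc u v : C := (u ^t* *m v) 0 0.
Definition sqnorm u : C := dotc u u.

Lemma dotcE u v : dotc u v = \sum_i (u i 0)^* * v i 0.
Proof. by rewrite /dotc mxE; apply: eq_bigr => i _; rewrite !mxE. Qed.

Lemma sqnormE v : sqnorm v = \sum_i `|v i 0| ^+ 2.
Proof. by rewrite /sqnorm dotcE; apply: eq_bigr => i _; rewrite normCK mulrC. Qed.

Lemma sqnorm_ge0 v : 0 <= sqnorm v.
Proof. by rewrite sqnormE sumr_ge0 // => i _; rewrite exprn_ge0. Qed.

Lemma dotcDl u v w : dotc (v + w) u = dotc v u + dotc w u.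
Proof. by rewrite !dotcE -big_split; apply: eq_bigr => i _; rewrite !mxE rmorphD mulrDl. Qed.

Lemma dotcDr u v w : dotc u (v + w) = dotc u v + dotc u w.
Proof. by rewrite !dotcE -big_split; apply: eq_bigr => i _; rewrite !mxE mulrDr. Qed.

Lemma dotcNl u v : dotc (- v) u = - dotc v u.
Proof. by rewrite !dotcE -sumrN; apply: eq_bigr => i _; rewrite !mxE rmorphN mulNr. Qed.

Lemma dotcNr u v : dotc u (- v) = - dotc u v.
Proof. by rewrite !dotcE -sumrN; apply: eq_bigr => i _; rewrite !mxE mulrN. Qed.

Lemma dotcZl a u v : dotc (a *: u) v = a^* * dotc u v.
Proof. by rewrite !dotcE mulr_sumr; apply: eq_bigr => i _; rewrite !mxE rmorphM mulrA. Qed.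

Lemma dotcZr a u v : dotc u (a *: v) = a * dotc u v.
Proof. by rewrite !dotcE mulr_sumr; apply: eq_bigr => i _; rewrite !mxE mulrCA. Qed.

Lemma dotc_sumr (I : finType) u (F : I -> 'cV[C]_k) :
  dotc u (\sum_i F i) = \sum_i dotc u (F i).
Proof. by rewrite /dotc mulmx_sumr summxE. Qed.

Lemma dotc_herm M u v : M ^t* = M -> dotc u (M *m v) = dotc (M *m u) v.
Proof. by move=> hM; rewrite /dotc trmx_mul map_mxM hM mulmxA. Qed.

Lemma dotc_herm_real M u : M ^t* = M -> dotc u (M *m u) \is Num.real.
Proof.
move=> hM; rewrite CrealE {2}(dotc_herm _ _ hM) !dotcE rmorph_sum /=.
by apply/eqP/eq_bigr => i _; rewrite rmorphM /= conjCK mulrC.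
Qed.

Lemma CauchySchwarz_dotc u v : `|dotc u v| ^+ 2 <= sqnorm u * sqnorm v.
Proof.
have dotc_dotmx x y : dotc x y = dotmx y^T x^T.
  by rewrite dotcE dotmxE mxE; apply: eq_bigr => i _; rewrite !mxE mulrC.
by rewrite /sqnorm !dotc_dotmx mulrC; case: (CauchySchwarz (@dotmx C k) v^T u^T).
Qed.

(* Polarization with [a = M v + r v] and [b = M v - r v]:
   [<a, M a> - <b, M b> = 4 r |M v|^2] and [|a|^2 + |b|^2 = 2 |M v|^2 + 2 r^2 |v|^2]. *)
Lemma sqnorm_herm_mulmx_le r M v : 0 < r -> M ^t* = M ->
  (forall x, `|dotc x (M *m x)| <= r * sqnorm x) ->
  sqnorm (M *m v) <= r ^+ 2 * sqnorm v.
Proof.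
move=> r_gt0 hM Mbound; set w := M *m v.
have rJ : r^* = r by rewrite conj_Creal ?gtr0_real.
have Mw : dotc v (M *m w) = sqnorm w by rewrite dotc_herm.
have polar : dotc (w + r *: v) (M *m (w + r *: v)) -
              dotc (w - r *: v) (M *m (w - r *: v)) = 4%:R * r * sqnorm w.
  rewrite !mulmxDr mulmxN -!scalemxAr -/w !dotcDl !dotcDr !dotcNl !dotcNr !dotcZl !dotcZr.
  by rewrite rJ Mw /sqnorm; ring.
have parallel : sqnorm (w + r *: v) + sqnorm (w - r *: v) =
                2%:R * sqnorm w + 2%:R * r ^+ 2 * sqnorm v.
  by rewrite /sqnorm !dotcDl !dotcDr !dotcNl !dotcNr !dotcZl !dotcZr rJ; ring.
have : 4%:R * r * sqnorm w <= r * (2%:R * sqnorm w + 2%:R * r ^+ 2 * sqnorm v).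
  have w_ge0 : 0 <= 4%:R * r * sqnorm w :=
    mulr_ge0 (mulr_ge0 (ler0n _ 4) (ltW r_gt0)) (sqnorm_ge0 w).
  rewrite -(ger0_norm w_ge0) -polar -parallel mulrDr.
  by apply: (le_trans (ler_normB _ _)); apply: lerD.
have -> : 4%:R * r * sqnorm w = 2%:R * r * sqnorm w + 2%:R * r * sqnorm w by ring.
have -> : r * (2%:R * sqnorm w + 2%:R * r ^+ 2 * sqnorm v) =
          2%:R * r * sqnorm w + 2%:R * r * (r ^+ 2 * sqnorm v) by ring.
by rewrite lerD2l ler_pM2l ?mulr_gt0 ?ltr0n.
Qed.

Lemma herm_exp S m : S ^t* = S -> (S ^+ m) ^t* = S ^+ m.
Proof.
move=> hS; elim: m => [|m IH].
  apply/matrixP => i j; rewrite expr0 !mxE eq_sym.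
  by case: (_ == _); rewrite ?conjC1 ?conjC0.
by rewrite exprS -mulmxE trmx_mul map_mxM IH hS mulmxE -exprS exprSr.
Qed.

(* Cauchy-Schwarz row by row; the trace is the squared Frobenius norm of [T]. *)
Lemma sqnorm_mulmx_le_tr T v : sqnorm (T *m v) <= sqnorm v * \tr (T *m T ^t*).
Proof.
rewrite sqnormE /mxtrace mulr_sumr; apply: ler_sum => i _.
pose t : 'cV[C]_k := \col_j (T i j)^*.
have -> : (T *m v) i 0 = dotc t v.
  by rewrite dotcE mxE; apply: eq_bigr => j _; rewrite !mxE conjCK.
have -> : (T *m T ^t*) i i = sqnorm t.
  by rewrite /sqnorm dotcE mxE; apply: eq_bigr => j _; rewrite !mxE conjCK.
by rewrite mulrC; apply: CauchySchwarz_dotc.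
Qed.

Lemma norm_dotc_sqr_le T v : T ^t* = T -> sqnorm v = 1 ->
  `|dotc v (T *m v)| ^+ 2 <= dotc v (T ^+ 2 *m v).
Proof.
move=> hT v1; apply: le_trans (CauchySchwarz_dotc v (T *m v)) _.
by rewrite v1 mul1r expr2 -mulmxE -mulmxA [X in _ <= X]dotc_herm.
Qed.

Lemma norm_dotc_exp2_le S v j : S ^t* = S -> sqnorm v = 1 ->
  `|dotc v (S *m v)| ^+ (2 ^ j.+1) <= dotc v (S ^+ (2 ^ j.+1) *m v).
Proof.
move=> hS v1; elim: j => [|j IH]; first by rewrite expn1 norm_dotc_sqr_le.
have quad_ge0 : 0 <= dotc v (S ^+ (2 ^ j.+1) *m v).
  exact: le_trans (exprn_ge0 _ (normr_ge0 _)) IH.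
rewrite expnS mulnC !exprM.
apply: le_trans (norm_dotc_sqr_le (herm_exp _ hS) v1).
by rewrite (ger0_norm quad_ge0) ler_pXn2r // nnegrE exprn_ge0.
Qed.

Lemma norm_dotc_exp2_le_tr S v j : S ^t* = S -> sqnorm v = 1 ->
  `|dotc v (S *m v)| ^+ (2 ^ j.+1) <= \tr (S ^+ (2 ^ j.+1)).
Proof.
move=> hS v1; apply: le_trans (norm_dotc_exp2_le j hS v1) _.
have hT := herm_exp (2 ^ j) hS.
have -> : S ^+ (2 ^ j.+1) = S ^+ (2 ^ j) *m S ^+ (2 ^ j).
  by rewrite mulmxE -exprD expnS mul2n addnn.
rewrite -mulmxA dotc_herm //.
by have := sqnorm_mulmx_le_tr (S ^+ (2 ^ j)) v; rewrite v1 mul1r hT.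
Qed.

Lemma sqnorm_prod_mulmx_le (I : Type) (s : seq I) (F : I -> 'M[C]_k) r v :
  0 <= r -> (forall i x, sqnorm (F i *m x) <= r ^+ 2 * sqnorm x) ->
  sqnorm ((\prod_(i <- s) F i) *m v) <= (r ^+ size s) ^+ 2 * sqnorm v.
Proof.
move=> r_ge0 Fbound; elim: s => [|i s IH].
  by rewrite big_nil mul1mx expr0 expr1n mul1r.
rewrite big_cons -mulmxE -mulmxA /= (exprS r) exprMn -mulrA.
by apply: le_trans (Fbound _ _) _; rewrite ler_wpM2l ?exprn_ge0.
Qed.

Lemma norm_mxtrace_le P rho : 0 <= rho ->
  (forall v, sqnorm (P *m v) <= rho ^+ 2 * sqnorm v) -> `|\tr P| <= k%:R * rho.
Proof.
move=> rho_ge0 Pbound.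
have diag_le i : `|P i i| <= rho.
  pose e : 'cV[C]_k := delta_mx i 0.
  have e1 : sqnorm e = 1.
    rewrite sqnormE (bigD1 i) //= big1 => [|j ji].
      by rewrite !mxE !eqxx normr1 expr1n addr0.
    by rewrite !mxE (negPf ji) normr0 expr0n.
  have Pe : (P *m e) i 0 = P i i by rewrite /e -colE !mxE.
  have : `|(P *m e) i 0| ^+ 2 <= rho ^+ 2.
    rewrite -[rho ^+ 2]mulr1 -e1; apply: le_trans (Pbound e).
    by rewrite sqnormE (bigD1 i) //= lerDl sumr_ge0 // => j _; rewrite exprn_ge0.
  by rewrite Pe ler_pXn2r // nnegrE.
rewrite /mxtrace; apply: le_trans (ler_norm_sum _ _ _) _.
by apply: le_trans (ler_sum _ (fun i _ => diag_le i)) _; rewrite sumr_const card_ord mulr_natl.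
Qed.

End DotProduct.

Lemma big_tuple0 (V : nmodType) (X : finType) (F : 0.-tuple X -> V) :
  \sum_(t : 0.-tuple X) F t = F [tuple].
Proof. by rewrite (big_pred1 [tuple]) // => t /=; rewrite [t]tuple0; apply/esym/eqP. Qed.

Lemma big_tuple_cons (V : nmodType) (X : finType) m (F : m.+1.-tuple X -> V) :
  \sum_(t : m.+1.-tuple X) F t = \sum_x \sum_(u : m.-tuple X) F [tuple of x :: u].
Proof.
rewrite pair_big /= (reindex (fun p : X * m.-tuple X => [tuple of p.1 :: p.2])) //=.
exists (fun t : m.+1.-tuple X => (thead t, [tuple of behead t])) => [[x u] _|t _] /=.
  by rewrite theadE; congr pair; apply: val_inj.
by rewrite -tuple_eta.
Qed.

Section RandomSigns.
Variables (C : numClosedFieldType) (k : nat) (X : finType) (M : X -> 'M[C]_k).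
Implicit Type L : {ffun X -> bool}.

Definition rademacher L x : C := if L x then 1 else -1.

Definition signed_sum L : 'M[C]_k := \sum_x rademacher L x *: M x.

Definition even_mult (s : seq X) := [forall x, ~~ odd (count_mem x s)].

Lemma signed_sum_exp L m : signed_sum L ^+ m =
  \sum_(t : m.-tuple X) (\prod_(y <- t) rademacher L y) *: \prod_(y <- t) M y.
Proof.
elim: m => [|m IH]; first by rewrite big_tuple0 !big_nil scale1r expr0.
rewrite exprS IH big_tuple_cons /signed_sum mulr_suml; apply: eq_bigr => x _.
rewrite mulr_sumr; apply: eq_bigr => u _ /=.
by rewrite !big_cons -mulmxE -scalemxAl -scalemxAr scalerA.
Qed.

Lemma prod_rademacher L (s : seq X) :
  \prod_(y <- s) rademacher L y = \prod_x rademacher L x ^+ count_mem x s.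
Proof.
elim: s => [|y s IH]; first by rewrite big_nil big1 // => x _; rewrite expr0.
rewrite big_cons IH /= (bigD1 y) //= [in RHS](bigD1 y) //= eqxx add1n exprS mulrA.
by congr (_ * _); apply: eq_bigr => x yx; rewrite eq_sym (negPf yx) add0n.
Qed.

(* Orthogonality of characters of [(Z/2)^X]: averaging a monomial in the signs
   kills it unless every variable occurs with even multiplicity. *)
Lemma sum_prod_rademacher (s : seq X) :
  \sum_L \prod_(y <- s) rademacher L y = if even_mult s then (2 ^ #|X|)%:R else 0.
Proof.
under eq_bigr do rewrite prod_rademacher.
rewrite -(bigA_distr_bigA (fun x (b : bool) => (if b then 1 else -1 : C) ^+ count_mem x s)) /=.
under eq_bigr do rewrite big_bool /= expr1n.
case: ifP => [/forallP even_s|].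
  rewrite natrX -prodr_const; apply: eq_bigr => x _.
  by rewrite -signr_odd (negPf (even_s x)) expr0.
move/negbT; rewrite negb_forall => /existsP [x /negPn odd_x].
by rewrite (bigD1 x) //= -signr_odd odd_x expr1 addrN mul0r.
Qed.

Lemma sum_tr_signed_sum_exp m : \sum_L \tr (signed_sum L ^+ m) =
  (2 ^ #|X|)%:R * \sum_(t : m.-tuple X | even_mult t) \tr (\prod_(y <- t) M y).
Proof.
under eq_bigr do rewrite signed_sum_exp raddf_sum /=.
rewrite exchange_big /= [in RHS]big_mkcond mulr_sumr; apply: eq_bigr => t _ /=.
under eq_bigr do rewrite mxtraceZ.
by rewrite -mulr_suml sum_prod_rademacher; case: ifP; rewrite ?mul0r ?mulr0.
Qed.

Lemma norm_sum_tr_signed_sum_exp r m : 0 <= r ->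
  (forall x v, sqnorm (M x *m v) <= r ^+ 2 * sqnorm v) ->
  `|\sum_L \tr (signed_sum L ^+ m)| <=
    (2 ^ #|X| * k * #|[set t : m.-tuple X | even_mult t]|)%:R * r ^+ m.
Proof.
move=> r_ge0 Mbound; rewrite sum_tr_signed_sum_exp normrM ger0_norm ?ler0n //.
rewrite !natrM -!mulrA ler_wpM2l ?ler0n //.
have tr_le (t : m.-tuple X) : `|\tr (\prod_(y <- t) M y)| <= k%:R * r ^+ m.
  apply: norm_mxtrace_le; first exact: exprn_ge0.
  by move=> v; have := sqnorm_prod_mulmx_le t v r_ge0 Mbound; rewrite size_tuple.
apply: le_trans (ler_norm_sum _ _ _) _; apply: le_trans (ler_sum _ (fun t _ => tr_le t)) _.
by rewrite sumr_const cardsE mulrCA [in X in _ <= X]mulr_natl.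
Qed.

End RandomSigns.

Arguments rademacher {C X} L x.

Lemma rem_index_cat (T : eqType) (x : T) (u : seq T) : x \in u ->
  u = take (index x u) (rem x u) ++ x :: drop (index x u) (rem x u).
Proof.
move=> xu; have size_take_u : size (take (index x u) u) = index x u.
  by rewrite size_take index_mem xu.
rewrite remE take_size_cat // drop_size_cat //.
by rewrite -{1}(cat_take_drop (index x u) u) (drop_nth x) ?index_mem // nth_index.
Qed.

Section EvenMultiplicity.
Variable X : finType.
Local Open Scope nat_scope.

Lemma even_mult_cons_mem (x : X) (u : seq X) : even_mult (x :: u) -> x \in u.
Proof.
move=> /forallP /(_ x) /=; rewrite eqxx add1n /= -has_pred1 has_count.
by case: (count _ _).
Qed.

Lemma even_mult_cons_rem (x : X) (u : seq X) : even_mult (x :: u) -> even_mult (rem x u).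
Proof.
move=> xu_even; have xu := even_mult_cons_mem xu_even.
move/forallP: xu_even => xu_even; apply/forallP => y.
have := xu_even y; rewrite count_mem_rem /=.
case: (eqVneq x y) => [<-|xy]; last by rewrite add0n subn0.
have : 0 < count_mem x u by rewrite -has_count has_pred1.
by case: (count_mem x u) => // c _ /=; rewrite subn1 /= !negbK.
Qed.

(* A sequence of even multiplicities is determined by its head [x], the position
   of the next occurrence of [x], and the (even) rest with that occurrence removed. *)
Lemma card_even_mult_SS m :
  #|[set t : m.+2.-tuple X | even_mult t]| <=
    #|X| * m.+1 * #|[set t : m.-tuple X | even_mult t]|.
Proof.
pose A := [set t : m.+2.-tuple X | even_mult t].
pose code (t : m.+2.-tuple X) : X * 'I_m.+1 * m.-tuple X :=
  (thead t, inord (index (thead t) (behead t)),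
   insubd [tuple of nseq m (thead t)] (rem (thead t) (behead t))).
have tE t : val t = thead t :: behead t by rewrite [in LHS](tuple_eta t).
have head_mem t : t \in A -> thead t \in behead t.
  by rewrite inE tE => /even_mult_cons_mem.
have size_rem t : t \in A -> size (rem (thead t) (behead t)) == m.
  by move=> tA; rewrite size_rem ?head_mem // size_behead size_tuple.
have index_lt t : t \in A -> index (thead t) (behead t) < m.+1.
  by move=> /head_mem; rewrite -index_mem size_behead size_tuple.
have code_inj : {in A &, injective code}.
  move=> t1 t2 t1A t2A [e1 e2 e3]; apply: val_inj; rewrite tE [RHS]tE -e1.
  congr cons; rewrite (rem_index_cat (head_mem _ t1A)) e1 (rem_index_cat (head_mem _ t2A)).
  have -> : rem (thead t2) (behead t1) = rem (thead t2) (behead t2).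
    by have := congr1 val e3; rewrite !val_insubd -e1 size_rem // e1 size_rem.
  move: e2 (index_lt _ t1A) (index_lt _ t2A); rewrite e1 => /(congr1 val) /=.
  by move=> + i1 i2; rewrite !inordK // => ->.
rewrite -(card_in_imset code_inj).
apply: leq_trans (subset_leq_card (_ : _ \subset setX setT [set t : m.-tuple X | even_mult t])) _.
  apply/subsetP => _ /imsetP [t tA ->]; rewrite !inE /= val_insubd size_rem //.
  by apply: even_mult_cons_rem; rewrite -tE; move: tA; rewrite inE.
by rewrite cardsX cardsT card_prod card_ord.
Qed.

Lemma card_even_mult_le h :
  #|[set t : h.*2.-tuple X | even_mult t]| <= (h.*2 * #|X|) ^ h.
Proof.
elim: h => [|h IH]; first by rewrite (leq_trans (max_card _)) // card_tuple.
rewrite doubleS (leq_trans (card_even_mult_SS _)) // expnS leq_mul //.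
  by rewrite mulnC leq_mul2r leqnSn orbT.
apply: leq_trans IH _; case: (posnP h) => [-> // | h_gt0].
by rewrite leq_exp2r // leq_mul2r (leq_trans (leqnSn _) (leqnSn _)) orbT.
Qed.

End EvenMultiplicity.

Section Bias.
Variables (C : numClosedFieldType) (k : nat) (X : finType).
Variables (psi : {ffun X -> bool} -> 'cV[C]_k) (M : X -> 'M[C]_k) (r : C).
Hypothesis psi_unit : forall L, sqnorm (psi L) = 1.
Hypothesis M_herm : forall x, M x ^t* = M x.
Hypothesis r_gt0 : 0 < r.
Hypothesis M_numerical_radius : forall x v, `|dotc v (M x *m v)| <= r * sqnorm v.

Local Notation nfun := #|{: {ffun X -> bool}}|.

Definition bias := \sum_L dotc (psi L) (signed_sum M L *m psi L).

Lemma card_boolfun : nfun = (2 ^ #|X|)%N.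
Proof. by rewrite card_ffun card_bool. Qed.

Lemma signed_sum_herm L : signed_sum M L ^t* = signed_sum M L.
Proof.
apply/matrixP => a b; rewrite !mxE !summxE rmorph_sum; apply: eq_bigr => x _.
have := congr1 (fun A : 'M[C]_k => A a b) (M_herm x); rewrite !mxE => <-.
by rewrite rmorphM /= /rademacher; case: (L x); rewrite ?rmorphN rmorph1.
Qed.

Lemma bias_real : bias \is Num.real.
Proof. by apply: rpred_sum => L _; apply: dotc_herm_real; apply: signed_sum_herm. Qed.

Lemma norm_bias_le : `|bias| <= (nfun * #|X|)%:R * r.
Proof.
have term_le L : `|dotc (psi L) (signed_sum M L *m psi L)| <= #|X|%:R * r.
  have -> : #|X|%:R * r = \sum_(x : X) r by rewrite sumr_const mulr_natl.
  rewrite /signed_sum mulmx_suml dotc_sumr; apply: le_trans (ler_norm_sum _ _ _) _.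
  apply: ler_sum => x _; rewrite -scalemxAl dotcZr normrM.
  have := M_numerical_radius x (psi L); rewrite psi_unit mulr1.
  by rewrite /rademacher; case: (L x); rewrite ?normrN normr1 mul1r.
have -> : (nfun * #|X|)%:R * r = \sum_(L : {ffun X -> bool}) #|X|%:R * r.
  by rewrite sumr_const natrM -mulrA mulr_natl.
by apply: le_trans (ler_norm_sum _ _ _) _; apply: ler_sum => L _.
Qed.

Lemma sqnorm_M_mulmx_le x v : sqnorm (M x *m v) <= r ^+ 2 * sqnorm v.
Proof. exact: sqnorm_herm_mulmx_le. Qed.

Lemma bias_exp2_le_sum_tr j : bias ^+ (2 ^ j.+1) <=
  nfun%:R ^+ (2 ^ j.+1 - 1) * \sum_L \tr (signed_sum M L ^+ (2 ^ j.+1)).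
Proof.
apply: le_trans (real_exp2_sum_le _ _) _.
  by move=> L; apply: dotc_herm_real; apply: signed_sum_herm.
rewrite ler_wpM2l ?exprn_ge0 ?ler0n //; apply: ler_sum => L _.
apply: le_trans (real_ler_norm _) _.
  by rewrite rpredX // dotc_herm_real // signed_sum_herm.
by rewrite normrX norm_dotc_exp2_le_tr ?signed_sum_herm.
Qed.

Lemma bias_moment_le j (h := (2 ^ j)%N) : bias ^+ h.*2 <=
  nfun%:R ^+ h.*2 * k%:R * ((h.*2 * #|X|)%:R * r ^+ 2) ^+ h.
Proof.
have m_eq : (2 ^ j.+1)%N = h.*2 by rewrite expnS mul2n.
have tr_ge0 L : 0 <= \tr (signed_sum M L ^+ h.*2).
  rewrite -m_eq; apply: le_trans (exprn_ge0 _ (normr_ge0 _)) _.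
  exact: norm_dotc_exp2_le_tr (signed_sum_herm L) (psi_unit L).
have := bias_exp2_le_sum_tr j; rewrite m_eq => /le_trans; apply.
have := norm_sum_tr_signed_sum_exp h.*2 (ltW r_gt0) sqnorm_M_mulmx_le.
rewrite ger0_norm ?sumr_ge0 // => /(ler_wpM2l (exprn_ge0 (h.*2 - 1) (ler0n C nfun))) /le_trans.
apply; rewrite -card_boolfun !natrM.
have -> : nfun%:R ^+ h.*2 = nfun%:R ^+ (h.*2 - 1) * nfun%:R :> C.
  by rewrite -exprSr subn1 prednK // double_gt0 expn_gt0.
rewrite -!mulrA !ler_wpM2l ?exprn_ge0 ?ler0n // mulrA -natrM exprMn -exprM mul2n.
by rewrite ler_wpM2r ?exprn_ge0 ?(ltW r_gt0) // -natrX ler_nat card_even_mult_le.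
Qed.

(* In dimension at most one the quadratic form is the trace, and no word of
   length one has even multiplicities. *)
Lemma bias_eq0 : (k <= 1)%N -> bias = 0.
Proof.
move=> k_le1.
have quad_tr L : dotc (psi L) (signed_sum M L *m psi L) = \tr (signed_sum M L).
  rewrite -[RHS]mulr1 -(psi_unit L) /sqnorm !dotcE /mxtrace.
  case: k M psi k_le1 => [|[|//]] ? ? _; first by rewrite !big_ord0 mul0r.
  by rewrite !big_ord1 mxE big_ord1 mulrCA.
rewrite /bias (eq_bigr _ (fun L _ => quad_tr L)).
have := sum_tr_signed_sum_exp M 1.
rewrite (eq_bigr (fun L => \tr (signed_sum M L))) => [->|L _]; last by rewrite expr1.
rewrite big_pred0 ?mulr0 // => -[[|x [|//]] //= _].
by apply/negbTE/forallP => /(_ x) /=; rewrite eqxx.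
Qed.

Lemma bias_sqr_le q : k = (2 ^ q)%N ->
  bias ^+ 2 <= 8%:R * (q * #|X|)%:R * r ^+ 2 * nfun%:R ^+ 2.
Proof.
move=> k_eq; have [q0 | q_gt0] := posnP q.
  by rewrite bias_eq0 ?k_eq ?q0 // mul0n mulr0 !mul0r expr2 mulr0.
(* [h = 2^(floor (log2 q))], so that [h <= q] and [k = 2^q <= 4^h]. *)
have /andP [h_le_q q_lt_2h] := trunc_log_bounds (isT : (1 < 2)%N) q_gt0.
move: h_le_q q_lt_2h (bias_moment_le (trunc_log 2 q)).
set h := (2 ^ trunc_log 2 q)%N; rewrite expnS mul2n => h_le_q q_lt_2h moment.
have Y_ge0 : 0 <= (h.*2 * #|X|)%:R * r ^+ 2 :> C.
  by rewrite mulr_ge0 ?ler0n ?exprn_ge0 ?(ltW r_gt0).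
have base : 8%:R * (h * #|X|)%:R * r ^+ 2 * nfun%:R ^+ 2 =
    nfun%:R ^+ 2 * 4%:R * ((h.*2 * #|X|)%:R * r ^+ 2) :> C.
  by rewrite -mul2n !natrM; ring.
have k_le : k%:R <= 4%:R ^+ h :> C.
  by rewrite k_eq -natrX ler_nat (_ : 4 = 2 ^ 2)%N // -expnM mul2n leq_exp2l // ltnW.
have : (bias ^+ 2) ^+ h <= (8%:R * (h * #|X|)%:R * r ^+ 2 * nfun%:R ^+ 2) ^+ h.
  rewrite base -[(bias ^+ 2) ^+ h]exprM exprMn exprMn -exprM !mul2n.
  apply: le_trans moment _.
  by rewrite ler_wpM2r ?exprn_ge0 // ler_wpM2l ?exprn_ge0 ?ler0n.
have h_gt0 : (0 < h)%N by rewrite expn_gt0.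
rewrite ler_pXn2r //; rewrite ?nnegrE ?real_exprn_even_ge0 ?bias_real //; last first.
  by rewrite !mulr_ge0 ?exprn_ge0 ?ler0n ?(ltW r_gt0).
move=> bias_le; apply: le_trans bias_le _; rewrite ler_wpM2r ?exprn_ge0 ?ler0n //.
by rewrite ler_wpM2r ?exprn_ge0 ?(ltW r_gt0) // ler_wpM2l ?ler0n // ler_nat leq_mul2r h_le_q orbT.
Qed.

End Bias.

Section SuccessProbability.
Variables (R : realType) (n q : nat).
Variables (psi : boolfun n -> 'cV[R[i]]_(2 ^ q)) (E : bits n -> 'M[R[i]]_(2 ^ q)).
Hypothesis psi_state : forall L, is_state (psi L).
Hypothesis E_effect : forall x, is_effect (E x).

Definition centered x := E x - (2%:R^-1)%:M.

Lemma psi_unit L : sqnorm (psi L) = 1.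
Proof. exact: psi_state. Qed.

Lemma E_herm x : E x ^t* = E x.
Proof. by case: (E_effect x). Qed.

Lemma E_bounds x v : 0 <= dotc v (E x *m v) <= sqnorm v.
Proof. by case: (E_effect x) => _ /(_ v) [lo hi]; rewrite /dotc mulmxA lo hi. Qed.

Lemma centered_herm x : centered x ^t* = centered x.
Proof.
apply/matrixP => i j; have := congr1 (fun A : 'M[R[i]]_(2 ^ q) => A i j) (E_herm x).
rewrite !mxE => <-; rewrite rmorphB /= eq_sym; congr (_ - _).
by case: (_ == _); rewrite /= ?mulr1n ?mulr0n ?rmorph0 // fmorphV /= rmorph_nat.
Qed.

Lemma dotc_centered x v :
  dotc v (centered x *m v) = dotc v (E x *m v) - 2%:R^-1 * sqnorm v.
Proof. by rewrite mulmxBl mul_scalar_mx dotcDr dotcNr dotcZr. Qed.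

Lemma centered_numerical_radius x v :
  `|dotc v (centered x *m v)| <= 2%:R^-1 * sqnorm v.
Proof.
have /andP [lo hi] := E_bounds x v.
have half : 2%:R^-1 * sqnorm v + 2%:R^-1 * sqnorm v = sqnorm v by field.
rewrite dotc_centered real_ler_norml ?rpredB ?ger0_real ?mulr_ge0 ?invr_ge0 ?ler0n ?sqnorm_ge0 //.
by rewrite lerBrDr addNr lo lerBlDr half hi.
Qed.

Lemma prob_oneE x (L : boolfun n) :
  ((prob_one (E x) (psi L))%:C)%C = dotc (psi L) (E x *m psi L).
Proof.
have /andP [lo _] := E_bounds x (psi L).
by rewrite /prob_one -mulmxA RRe_real // ger0_real.
Qed.

Lemma success_termE x (L : boolfun n) :
  ((if L x then prob_one (E x) (psi L) else 1 - prob_one (E x) (psi L))%:C)%C =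
  2%:R^-1 + rademacher L x * dotc (psi L) (centered x *m psi L).
Proof.
rewrite dotc_centered psi_unit mulr1 /rademacher.
by case: (L x); rewrite ?rmorphB ?rmorph1 /= (prob_oneE x L); field.
Qed.

Lemma card_bits_gt0 : (0 < #|{: bits n}|)%N.
Proof. by apply/card_gt0P; exists [tuple of nseq n false]. Qed.

Lemma card_boolfun_gt0 : (0 < #|{: boolfun n}|)%N.
Proof. by apply/card_gt0P; exists [ffun=> false]. Qed.

Definition advantage := success_prob psi E - 2%:R^-1.

Lemma advantage_biasE : ((advantage%:C)%C : R[i]) =
  (#|{: bits n}| * #|{: boolfun n}|)%:R^-1 * bias psi centered.
Proof.
have biasE : bias psi centered =
    \sum_x \sum_L rademacher L x * dotc (psi L) (centered x *m psi L).
  rewrite /bias exchange_big /=; apply: eq_bigr => L _.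
  by rewrite /signed_sum mulmx_suml dotc_sumr; apply: eq_bigr => x _; rewrite -scalemxAl dotcZr.
have sumE : \sum_(x : bits n) \sum_(L : boolfun n)
    ((if L x then prob_one (E x) (psi L) else 1 - prob_one (E x) (psi L))%:C)%C =
    (#|{: bits n}| * #|{: boolfun n}|)%:R * 2%:R^-1 + bias psi centered.
  rewrite biasE natrM -mulrA mulr_natl -sumr_const -big_split /=; apply: eq_bigr => x _.
  rewrite mulr_natl -sumr_const -big_split /=; apply: eq_bigr => L _.
  exact: success_termE.
have NK_neq0 : (#|{: bits n}| * #|{: boolfun n}|)%:R != 0 :> R[i].
  by rewrite pnatr_eq0 -lt0n muln_gt0 card_bits_gt0 card_boolfun_gt0.
rewrite /advantage /success_prob -natrM rmorphB rmorphM /= !fmorphV /= !rmorph_nat rmorph_sum /=.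
under eq_bigr do rewrite rmorph_sum /=.
by rewrite sumE mulrDr mulrA mulVf // mul1r addrAC subrr add0r.
Qed.

Lemma advantage_le_half : advantage <= 2%:R^-1.
Proof.
rewrite -lecR; apply: le_trans (real_ler_norm _) _; first by apply/complex_realP; exists advantage.
rewrite advantage_biasE normrM ger0_norm ?invr_ge0 ?ler0n //.
apply: le_trans (ler_wpM2l _ (norm_bias_le psi_unit centered_numerical_radius)) _.
  by rewrite invr_ge0 ler0n.
rewrite mulnC mulrA mulVf ?mul1r ?fmorphV ?rmorph_nat //.
by rewrite pnatr_eq0 -lt0n muln_gt0 card_bits_gt0 card_boolfun_gt0.
Qed.

Lemma sqr_advantage_le : advantage ^+ 2 <= 2%:R * (q%:R / #|{: bits n}|%:R).
Proof.
have half_gt0 : 0 < 2%:R^-1 :> R[i] by rewrite invr_gt0 ltr0n.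
rewrite -lecR rmorphXn /= advantage_biasE exprMn.
apply: le_trans (ler_wpM2l _ (bias_sqr_le psi_unit centered_herm half_gt0
  centered_numerical_radius (erefl _))) _; first by rewrite exprn_ge0 ?invr_ge0 ?ler0n.
have -> : ((2%:R * (q%:R / #|{: bits n}|%:R))%:C)%C =
    2%:R * (q%:R / #|{: bits n}|%:R) :> R[i].
  by rewrite rmorphM rmorph_nat rmorphM fmorphV !rmorph_nat.
rewrite le_eqVlt; apply/orP; left; apply/eqP.
by rewrite !natrM; field; rewrite !pnatr_eq0 -!lt0n card_bits_gt0 card_boolfun_gt0.
Qed.

End SuccessProbability.

Theorem mainTheorem10 (R : realType) :
  exists c : R, 0 < c /\
  forall (p : nat -> nat) (n : nat)
         (psi : boolfun n -> 'cV[R[i]]_(2 ^ p n))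
         (E : bits n -> 'M[R[i]]_(2 ^ p n)),
    (forall L, is_state (psi L)) ->
    (forall x, is_effect (E x)) ->
    success_prob psi E <= 2^-1 + c * powR ((p n)%:R / 2 ^+ n) (3%:R^-1).
Proof.
exists 2%:R; split; first by rewrite ltr0n.
move=> p n psi E psi_state E_effect.
rewrite -lerBlDl.
apply: le_double_of_sqr_le_cube (advantage_le_half psi_state E_effect) (powR_ge0 _ _) _.
have -> : powR ((p n)%:R / 2 ^+ n) 3%:R^-1 ^+ 3 = (p n)%:R / 2 ^+ n :> R.
  rewrite -powR_mulrn ?powR_ge0 // -powRrM mulVf ?pnatr_eq0 // powRr1 //.
  by rewrite divr_ge0 ?ler0n ?exprn_ge0.
by have := sqr_advantage_le psi_state E_effect; rewrite card_tuple card_bool natrX.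
Qed.
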